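(* Let $\mathbb{X}$ be a finite set, $\mathcal{H}_A$ a finite-dimensional Hilbert space, $\{\rho_A^x\}_{x\in\mathbb{X}}$ density operators on $\mathcal{H}_A$, and $\sim$ a neighbouring relationship on density operators such that $\rho_A^x\sim\rho_A^{x'}$ for all $x,x'\in\mathbb{X}$. Let $\mathcal{E}$ be a quantum channel that is $(\epsilon,0)$-differentially private with respect to $\sim$, for some $\epsilon\geq0$. Then, writing $\mathcal{E}(\rho_A)$ for the family $\{\mathcal{E}(\rho_A^x)\}_{x\in\mathbb{X}}$, \[ \mathcal{B}(X\rightarrow A)_{\mathcal{E}(\rho_A)}\leq\mathcal{R}(X\rightarrow A)_{\mathcal{E}(\rho_A)}\leq\epsilon/\ln(2). \]
   Context: All logarithms $\log$ are base 2; $\ln$ is the natural logarithm. A neighbouring relationship is a reflexive and symmetric relation $\sim$ on density operators. For $\epsilon,\delta\geq0$, a quantum channel $\mathcal{E}$ is $(\epsilon,\delta)$-differentially private (w.r.t. $\sim$) if $\operatorname{tr}(M\mathcal{E}(\rho))\leq e^{\epsilon}\operatorname{tr}(M\mathcal{E}(\sigma))+\delta$ for all operators $0\preceq M\preceq I$ and all $\rho\sim\sigma$. For a density operator $\rho$ and positive semi-definite $\sigma$, $\widetilde{D}_\infty(\rho\|\sigma)=\log\inf\{\mu\in\mathbb{R}:\rho\leq\mu\sigma\}$ ($+\infty$ if $\operatorname{supp}\rho\not\subseteq\operatorname{supp}\sigma$). For a family $\{\tau^x\}_{x\in\mathbb{X}}$ of density operators, $\mathcal{B}=\min_{\pi\in\Delta(\mathbb{X})}\max_x\widetilde{D}_\infty(\tau^x\|\sum_{x'}\pi(x')\tau^{x'})$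 (with $\Delta(\mathbb{X})$ the probability mass functions on $\mathbb{X}$) and $\mathcal{R}=\max_{x,x'}\widetilde{D}_\infty(\tau^x\|\tau^{x'})$. *)

From HB Require Import structures.
From mathcomp Require Import all_boot all_order all_algebra.
From mathcomp Require Import all_classical all_reals all_analysis.
From mathcomp Require Import constructive_ereal ereal exp.
From mathcomp Require Import complex mxtens.

Set Implicit Arguments.
Unset Strict Implicit.
Unset Printing Implicit Defensive.

Import Order.TTheory GRing.Theory Num.Theory.
Local Open Scope ring_scope.
Local Open Scope complex_scope.
Local Open Scope classical_set_scope.

Section QDefs.
Variable R : realType.
Local Notation C := (R[i]).

Definition adjmx m n (A : 'M[C]_(m, n)) : 'M[C]_(n, m) := (map_mx Num.conj A)^T.

Definition psd n (A : 'M[C]_n) : Prop :=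
  adjmx A = A /\ forall v : 'cV[C]_n, 0 <= (adjmx v *m A *m v) 0 0.

Definition loewner n (A B : 'M[C]_n) : Prop := psd (B - A).

Definition density n (rho : 'M[C]_n) : Prop := psd rho /\ \tr rho = 1.

Definition lin_map n m (E : 'M[C]_n -> 'M[C]_m) : Prop :=
  forall (a : C) (A B : 'M[C]_n), E (a *: A + B) = a *: E A + E B.

(* block (i,j) (of size n x n) of a matrix on C^k (x) C^n *)
Definition blockmx k n (X : 'M[C]_(k * n)) (i j : 'I_k) : 'M[C]_n :=
  \matrix_(a, b) X (mxtens_index (i, a)) (mxtens_index (j, b)).

(* ampliation id_k (x) E, acting blockwise *)
Definition ampl k n m (E : 'M[C]_n -> 'M[C]_m) (X : 'M[C]_(k * n)) : 'M[C]_(k * m) :=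
  \matrix_(p, q) E (blockmx X (mxtens_unindex p).1 (mxtens_unindex q).1)
                   (mxtens_unindex p).2 (mxtens_unindex q).2.

Definition completely_positive n m (E : 'M[C]_n -> 'M[C]_m) : Prop :=
  forall (k : nat) (X : 'M[C]_(k * n)), psd X -> psd (ampl E X).

Definition trace_preserving n m (E : 'M[C]_n -> 'M[C]_m) : Prop :=
  forall X : 'M[C]_n, \tr (E X) = \tr X.

Definition quantum_channel n m (E : 'M[C]_n -> 'M[C]_m) : Prop :=
  [/\ lin_map E, completely_positive E & trace_preserving E].

Definition neighbouring n (nb : 'M[C]_n -> 'M[C]_n -> Prop) : Prop :=
  (forall rho, density rho -> nb rho rho) /\
  (forall rho sigma, density rho -> density sigma -> nb rho sigma -> nb sigma rho).

Definition diff_private n m (nb : 'M[C]_n -> 'M[C]_n -> Prop)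
    (E : 'M[C]_n -> 'M[C]_m) (eps delta : R) : Prop :=
  forall (M : 'M[C]_m) (rho sigma : 'M[C]_n),
    psd M -> loewner M 1%:M -> density rho -> density sigma -> nb rho sigma ->
    \tr (M *m E rho) <= (expR eps)%:C * \tr (M *m E sigma) + delta%:C.

Definition log2 (x : R) : R := ln x / ln 2.

Definition Dmax n (rho sigma : 'M[C]_n) : \bar R :=
  if `[< exists mu : R, loewner rho (mu%:C *: sigma) >] then
    (log2 (inf [set mu : R | loewner rho (mu%:C *: sigma)]))%:E
  else +oo%E.

Definition pmf (X : finType) (pi : X -> R) : Prop :=
  (forall x, 0 <= pi x) /\ \sum_(x : X) pi x = 1.

Definition Bquant (X : finType) n (tau : X -> 'M[C]_n) : \bar R :=
  ereal_inf [set ereal_sup (range (fun x => Dmax (tau x)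
                   (\sum_(x' : X) (pi x')%:C *: tau x')))
            | pi in [set pi : X -> R | pmf pi]].

Definition Rquant (X : finType) n (tau : X -> 'M[C]_n) : \bar R :=
  ereal_sup (range (fun p : X * X => Dmax (tau p.1) (tau p.2))).

End QDefs.

(** With [delta = 0], differential privacy tested against every effect
    [0 <= M <= I] is the Loewner inequality [E rho <= e^eps E sigma]: testing
    against the rank-one projector onto a vector [v] shows that
    [v^* (e^eps E sigma - E rho) v >= 0], and a matrix whose quadratic form is
    nonnegative is positive semi-definite (by polarization it is hermitian).
    Hence every pairwise max-relative entropy of the outputs is at most
    [log2 (e^eps) = eps / ln 2], which bounds [R]; and [B <= R] because [B]
    minimizes over all distributions [pi], among them a point mass. *)

From Pilot Require Import Defs.
From HB Require Import structures.
From mathcomp Require Import all_boot all_order all_algebra.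
From mathcomp Require Import all_classical all_reals all_analysis.
From mathcomp Require Import constructive_ereal ereal exp.
From mathcomp Require Import complex mxtens.
From mathcomp Require Import ring.

Import Order.TTheory GRing.Theory Num.Theory.
Local Open Scope ring_scope.

(* With [qu = B(u,u)], [qw = B(w,w)], [a = B(u,w)], [b = B(w,u)] for a
   sesquilinear [B], the last two hypotheses say that [B(u+w,u+w)] and
   [B(u+iw,u+iw)] are real. *)
Lemma polarization_conj (C : numClosedFieldType) (qu qw a b : C) :
  qu \is Num.real -> qw \is Num.real ->
  qu + qw + a + b \is Num.real ->
  qu + 'i * a + 'i^* * b + 'i^* * ('i * qw) \is Num.real ->
  a^* = b.
Proof.
move=> /conj_Creal hu /conj_Creal hw /conj_Creal h1 /conj_Creal h2.
rewrite !rmorphD !rmorphM /= hu hw conjCK conjCi in h1 h2.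
have sqri : 'i * 'i = -1 :> C by rewrite -expr2 sqrCi.
set X := a^* in h1 h2 *; set Y := b^* in h1 h2.
have : (X - b) *+ 2 = ((qu + qw + X + Y) - (qu + qw + a + b))
   + 'i * ((qu + - 'i * X + 'i * Y + 'i * (- 'i * qw)) -
           (qu + 'i * a + - 'i * b + - 'i * ('i * qw)))
   + ('i * 'i + 1) * (X - Y + a - b) by ring.
rewrite h1 h2 sqri !subrr addNr mul0r mulr0 !addr0 => /eqP.
by rewrite mulrn_eq0 /= subr_eq0 => /eqP.
Qed.

Section QuantumMatrices.
Set Implicit Arguments.
Local Open Scope complex_scope.
Variable R : realType.
Local Notation C := (R[i]).

Lemma adjmxD m n (A B : 'M[C]_(m, n)) : adjmx (A + B) = adjmx A + adjmx B.
Proof. by apply/matrixP=> i j; rewrite !mxE rmorphD. Qed.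

Lemma adjmxN m n (A : 'M[C]_(m, n)) : adjmx (- A) = - adjmx A.
Proof. by apply/matrixP=> i j; rewrite !mxE rmorphN. Qed.

Lemma adjmxB m n (A B : 'M[C]_(m, n)) : adjmx (A - B) = adjmx A - adjmx B.
Proof. by rewrite adjmxD adjmxN. Qed.

Lemma adjmxZ m n a (A : 'M[C]_(m, n)) : adjmx (a *: A) = a^* *: adjmx A.
Proof. by apply/matrixP=> i j; rewrite !mxE rmorphM. Qed.

Lemma adjmxK m n (A : 'M[C]_(m, n)) : adjmx (adjmx A) = A.
Proof. by apply/matrixP=> i j; rewrite !mxE conjCK. Qed.

Lemma adjmxM m n p (A : 'M[C]_(m, n)) (B : 'M[C]_(n, p)) :
  adjmx (A *m B) = adjmx B *m adjmx A.
Proof.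
apply/matrixP=> i j; rewrite !mxE rmorph_sum; apply: eq_bigr => k _.
by rewrite !mxE rmorphM mulrC.
Qed.

Lemma adjmx1 n : adjmx (1%:M : 'M[C]_n) = 1%:M.
Proof. by apply/matrixP=> i j; rewrite !mxE conjC_nat eq_sym. Qed.

Lemma adjmx_delta n (i : 'I_n) :
  adjmx (delta_mx i 0 : 'cV[C]_n) = delta_mx 0 i.
Proof.
by apply/matrixP=> a b; rewrite !mxE (ord1 a) eqxx andbT conjC_nat.
Qed.

Definition cnorm2 n (v : 'cV[C]_n) : C := (adjmx v *m v) 0 0.

Lemma cnorm2_ge0 n (v : 'cV[C]_n) : 0 <= cnorm2 v.
Proof.
rewrite /cnorm2 !mxE; apply: sumr_ge0 => k _; rewrite !mxE mulrC.
exact: mul_conjC_ge0.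
Qed.

Lemma cnorm2_eq0 n (v : 'cV[C]_n) : (cnorm2 v == 0) = (v == 0).
Proof.
apply/eqP/eqP=> [|->]; last by rewrite /cnorm2 mulmx0 mxE.
rewrite /cnorm2 !mxE => v2_0; apply/matrixP=> k l; rewrite (ord1 l) [RHS]mxE.
have terms_ge0 (k' : 'I_n) : true -> 0 <= (v k' 0)^* * v k' 0.
  by rewrite mulrC mul_conjC_ge0.
have sum0 : \sum_(k' < n) (v k' 0)^* * v k' 0 = 0.
  by rewrite -[RHS]v2_0; apply: eq_bigr => k' _; rewrite !mxE.
have /eqP := psumr_eq0P terms_ge0 sum0 (i := k) isT.
by rewrite mulf_eq0 conjC_eq0 orbb => /eqP.
Qed.

Lemma psd_gram k n (A : 'M[C]_(k, n)) : psd (adjmx A *m A).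
Proof.
split; first by rewrite adjmxM adjmxK.
move=> v; have -> : adjmx v *m (adjmx A *m A) *m v = adjmx (A *m v) *m (A *m v).
  by rewrite adjmxM !mulmxA.
exact: (cnorm2_ge0 (A *m v)).
Qed.

Lemma psd_orthoproj n (P : 'M[C]_n) :
  adjmx P = P -> P *m P = P -> psd P /\ loewner P 1%:M.
Proof.
move=> Pherm Pidem; split; first by rewrite -Pidem -{1}Pherm; apply: psd_gram.
rewrite /loewner; have <- : adjmx (1%:M - P) *m (1%:M - P) = 1%:M - P.
  rewrite adjmxB adjmx1 Pherm !(mulmxBl, mulmxBr, mul1mx, mulmx1) Pidem.
  by rewrite subrr subr0.
exact: psd_gram.
Qed.

Definition sesq {n} (D : 'M[C]_n) (u w : 'cV[C]_n) : C := (adjmx u *m D *m w) 0 0.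

Lemma sesqDl n (D : 'M[C]_n) u1 u2 w : sesq D (u1 + u2) w = sesq D u1 w + sesq D u2 w.
Proof. by rewrite /sesq adjmxD !mulmxDl mxE. Qed.

Lemma sesqDr n (D : 'M[C]_n) u w1 w2 : sesq D u (w1 + w2) = sesq D u w1 + sesq D u w2.
Proof. by rewrite /sesq !mulmxDr mxE. Qed.

Lemma sesqZl n (D : 'M[C]_n) c u w : sesq D (c *: u) w = c^* * sesq D u w.
Proof. by rewrite /sesq adjmxZ -!scalemxAl mxE. Qed.

Lemma sesqZr n (D : 'M[C]_n) c u w : sesq D u (c *: w) = c * sesq D u w.
Proof. by rewrite /sesq -!scalemxAr mxE. Qed.

Lemma sesq_delta n (D : 'M[C]_n) (i j : 'I_n) :
  sesq D (delta_mx i 0) (delta_mx j 0) = D i j.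
Proof. by rewrite /sesq -colE adjmx_delta mxE -rowE mxE. Qed.

Lemma herm_of_real_sesq n (D : 'M[C]_n) :
  (forall v, sesq D v v \is Num.real) -> adjmx D = D.
Proof.
move=> Dreal; apply/matrixP=> i j; rewrite !mxE.
set u : 'cV[C]_n := delta_mx j 0; set w : 'cV[C]_n := delta_mx i 0.
rewrite -(sesq_delta D j i) -(sesq_delta D i j) -/u -/w.
apply: (@polarization_conj _ (sesq D u u) (sesq D w w)); rewrite ?Dreal //.
  have -> : sesq D u u + sesq D w w + sesq D u w + sesq D w u
            = sesq D (u + w) (u + w) by rewrite !sesqDl !sesqDr; ring.
  exact: Dreal.
have -> : sesq D u u + 'i * sesq D u w + 'i^* * sesq D w u
          + 'i^* * ('i * sesq D w w) = sesq D (u + 'i *: w) (u + 'i *: w).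
  by rewrite !sesqDl !sesqDr !sesqZl !sesqZr; ring.
exact: Dreal.
Qed.

Lemma psd_of_sesq_ge0 n (D : 'M[C]_n) : (forall v, 0 <= sesq D v v) -> psd D.
Proof.
move=> Dge0; split; last exact: Dge0.
by apply: herm_of_real_sesq => v; apply: ger0_real.
Qed.

Definition rank1_proj n (v : 'cV[C]_n) : 'M[C]_n := (cnorm2 v)^-1 *: (v *m adjmx v).

Lemma rank1_proj_effect n (v : 'cV[C]_n) :
  v != 0 -> psd (rank1_proj v) /\ loewner (rank1_proj v) 1%:M.
Proof.
rewrite -cnorm2_eq0 => v0; have vv : adjmx v *m v = (cnorm2 v)%:M.
  by rewrite [LHS]mx11_scalar.
apply: psd_orthoproj; rewrite /rank1_proj.
  rewrite adjmxZ adjmxM adjmxK fmorphV; congr (_^-1 *: _).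
  exact: geC0_conj (cnorm2_ge0 v).
rewrite -scalemxAl -scalemxAr scalerA mulmxA -(mulmxA v) vv mul_mx_scalar.
by rewrite -scalemxAl scalerA -mulrA mulVf // mulr1.
Qed.

Lemma tr_rank1_proj n (v : 'cV[C]_n) (D : 'M[C]_n) :
  \tr (rank1_proj v *m D) = (cnorm2 v)^-1 * sesq D v v.
Proof. by rewrite -scalemxAl mxtraceZ -mulmxA mxtrace_mulC trace_mx11. Qed.

Lemma psd_of_effect_tr_ge0 n (D : 'M[C]_n) :
  (forall M, psd M -> loewner M 1%:M -> 0 <= \tr (M *m D)) -> psd D.
Proof.
move=> trge0; apply: psd_of_sesq_ge0 => v.
have [->|v0] := eqVneq v 0; first by rewrite /sesq mulmx0 mxE.
have [Ppsd Ple1] := rank1_proj_effect v v0.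
have := trge0 _ Ppsd Ple1; rewrite tr_rank1_proj pmulr_rge0 // invr_gt0.
by rewrite lt_def cnorm2_ge0 cnorm2_eq0 v0.
Qed.

Lemma diff_private0_loewner n m (E : 'M[C]_n -> 'M[C]_m) nb (eps : R) rho sigma :
  diff_private nb E eps 0 -> density rho -> density sigma -> nb rho sigma ->
  loewner (E rho) ((expR eps)%:C *: E sigma).
Proof.
move=> dp rho_d sigma_d nb_rs; apply: psd_of_effect_tr_ge0 => M Mpsd Mle1.
have := dp M rho sigma Mpsd Mle1 rho_d sigma_d nb_rs.
by rewrite addr0 mulmxBr -scalemxAr linearB /= mxtraceZ subr_ge0.
Qed.

(* [1 <= mu] is needed because [ln] is [0] on nonpositive reals. *)
Lemma Dmax_le_log2 n (A B : 'M[C]_n) (mu : R) :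
  1 <= mu -> loewner A (mu%:C *: B) -> (Dmax A B <= (log2 mu)%:E)%E.
Proof.
move=> mu_ge1 AleB; rewrite /Dmax asboolT; last by exists mu.
rewrite lee_fin /log2 ler_wpM2r // ?invr_ge0 ?ln_ge0 ?ler1n //.
set S := [set mu : R | loewner A (mu%:C *: B)]%classic.
have [infS_le0|infS_gt0] := lerP (inf S) 0.
  by rewrite ln0 // ln_ge0.
have S_lb : has_lbound S.
  by apply/not_notP => Snlb; move: infS_gt0; rewrite inf_out ?ltxx //; case.
by rewrite ler_ln ?posrE ?(lt_le_trans _ mu_ge1) //; apply: ge_inf.
Qed.

Lemma Bquant_le_Rquant (X : finType) (x0 : X) n (tau : X -> 'M[C]_n) :
  (Bquant tau <= Rquant tau)%E.
Proof.
pose delta_x0 x : R := (x == x0)%:R.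
have delta_pmf : Defs.pmf delta_x0.
  split=> [x|]; first by rewrite ler0n.
  by rewrite (bigD1 x0) //= /delta_x0 eqxx big1 ?addr0 // => y /negbTE ->.
have mix_delta : \sum_(x : X) (delta_x0 x)%:C *: tau x = tau x0.
  rewrite (bigD1 x0) //= /delta_x0 eqxx scale1r big1 ?addr0 // => y /negbTE ->.
  by rewrite scale0r.
apply: (@le_trans _ _ (ereal_sup (range (fun x => Dmax (tau x) (tau x0))))).
  by apply: ereal_inf_lbound; exists delta_x0; rewrite ?mix_delta.
by apply: ereal_sup_le => _ [x _ <-]; exists (x, x0).
Qed.

End QuantumMatrices.

Theorem proposition6 (R : realType) (X : finType) (x0 : X) (n m : nat)
    (rho : X -> 'M[R[i]]_n) (nb : 'M[R[i]]_n -> 'M[R[i]]_n -> Prop)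
    (E : 'M[R[i]]_n -> 'M[R[i]]_m) (eps : R) :
  (forall x, density (rho x)) ->
  neighbouring nb ->
  (forall x x', nb (rho x) (rho x')) ->
  quantum_channel E ->
  0 <= eps ->
  diff_private nb E eps 0 ->
  (Bquant (fun x => E (rho x)) <= Rquant (fun x => E (rho x)))%E /\
  (Rquant (fun x => E (rho x)) <= (eps / ln 2)%:E)%E.
Proof.
move=> rho_d _ rho_nb _ eps_ge0 dp; split; first exact: Bquant_le_Rquant.
have expR_ge1 : 1 <= expR eps by rewrite (le_trans _ (expR_ge1Dx eps)) ?lerDl.
apply: ge_ereal_sup => _ [[x x'] _ <-] /=.
have -> : eps / ln 2 = log2 (expR eps) by rewrite /log2 expRK.
apply: Dmax_le_log2 expR_ge1 _.
exact: diff_private0_loewner dp (rho_d x) (rho_d x') (rho_nb x x').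
Qed.
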